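(* Let $g$ be a locally Lipschitz function on $\mathbb{R}$ and suppose there is a separately convex function $h$ on $\mathbb{R}^2$ such that $g(t)=h(t,t)$ for every $t\in\mathbb{R}$. Then $$h(x+u,x-u)+h(x-u,x+u)-2h(x,x)\ge -u\cdot\liminf_{v\to0+}\int_v^u\frac{\omega_g(x,t)}{t^2}\,dt$$ for every $x,u\in\mathbb{R}$ with $u>0$. In particular, for every bounded interval $I\subset\mathbb{R}$ there is a constant $C(g,I)$ such that $$-\liminf_{b\to0+}\int_b^1\frac{\omega_g(x,t)}{t^2}\,dt<C(g,I)$$ for every $x\in I$.
   Context: A function $h:\mathbb{R}^2\to\mathbb{R}$ is called separately convex if it is convex on every line parallel to a coordinate axis. For a real function $g$ on $\mathbb{R}$, $\omega_g(x,t):=g(x+t)+g(x-t)-2g(x)$ is its second order central difference at $x$. *)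

From HB Require Import structures.
From mathcomp Require Import all_boot all_order all_algebra.
From mathcomp Require Import all_classical all_reals all_analysis.
Set Implicit Arguments. Unset Strict Implicit. Unset Printing Implicit Defensive.
Import Order.TTheory GRing.Theory Num.Theory.
Import numFieldNormedType.Exports.
Local Open Scope classical_set_scope.
Local Open Scope ring_scope.

Definition convex_fun (R : realType) (f : R -> R) : Prop :=
  forall (a b l : R), 0 <= l -> l <= 1 ->
    f (l * a + (1 - l) * b) <= l * f a + (1 - l) * f b.

(* h : R^2 -> R (curried) is convex on every line parallel to a coordinate axis *)
Definition separately_convex (R : realType) (h : R -> R -> R) : Prop :=
  (forall y : R, convex_fun (fun s => h s y)) /\
  (forall s : R, convex_fun (fun y => h s y)).

Definition locally_lipschitz (R : realType) (g : R -> R) : Prop :=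
  forall x : R, exists2 d : R, 0 < d &
    exists L : R, forall y z : R, `|y - x| < d -> `|z - x| < d ->
      `|g y - g z| <= L * `|y - z|.

Definition omega (R : realType) (g : R -> R) (x t : R) : R :=
  g (x + t) + g (x - t) - 2 * g x.

(* v |-> \int_v^u omega_g(x,t)/t^2 dt  (extended-real valued Lebesgue integral
   over [v,u]; only 0 < v < u matters for the liminf at 0+) *)
Definition int_omega (R : realType) (g : R -> R) (x u v : R) : \bar R :=
  (\int[@lebesgue_measure R]_(t in `[v, u]) (omega g x t / t ^+ 2)%:E)%E.

Definition liminf_0plus (R : realType) (F : R -> \bar R) : \bar R :=
  limf_einf F (0 : R)^'+.

From HB Require Import structures.
From mathcomp Require Import all_boot all_order all_algebra.
From mathcomp Require Import all_classical all_reals all_analysis.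
From mathcomp Require Import ring lra.
Set Implicit Arguments. Unset Strict Implicit. Unset Printing Implicit Defensive.
Import Order.TTheory GRing.Theory Num.Theory.
Import numFieldNormedType.Exports.
Local Open Scope classical_set_scope.
Local Open Scope ring_scope.

(* Write D(r) := h(x+r,x-r) + h(x-r,x+r) - 2 h(x,x) and psi(t) := omega_g(x,t)/t^2.
   Convexity of h along the sides of the rectangle with corners x +- s, x +- r
   gives the discrete inequality D(s)/s - D(r)/r <= (r-s)/(r+s) (omega(s)/s + omega(r)/r),
   i.e. (D(t)/t)' >= -psi(t). As psi is continuous on (0, oo), a local-to-global
   monotonicity principle turns this into D(t)/t - \int_t^u psi <= D(u)/u. Together
   with D >= -omega (midpoint convexity) the same principle shows that
   (\int_t^u psi + D(u)/u)/t is nonincreasing in t, i.e.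
   \int_t^u psi >= -(D(u)/u)(1 - t/u), and t -> 0+ gives the first claim.
   The second one is the case u = 1: a separately convex function is bounded above
   on squares, and its diagonal is bounded below on intervals. *)

Section convex_fun.
Context {R : realType}.
Implicit Types (f : R -> R) (a b c p x r : R).

Lemma convex_fun_midpoint f x r : convex_fun f -> 2 * f x <= f (x + r) + f (x - r).
Proof.
move=> cf; have := cf (x + r) (x - r) (1 / 2) _ _.
rewrite (_ : 1 / 2 * (x + r) + (1 - 1 / 2) * (x - r) = x); last by field.
by move=> /(_ _ _) H; have := H ltac:(lra) ltac:(lra); lra.
Qed.

Lemma convex_fun_le_chord f a b c : convex_fun f -> a <= b -> b <= c -> a < c ->
  f b <= (c - b) / (c - a) * f a + (b - a) / (c - a) * f c.
Proof.
move=> cf ab bc ac; have ca : c - a != 0 by rewrite subr_eq0 gt_eqF.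
have := cf a c ((c - b) / (c - a)) _ _.
rewrite (_ : (c - b) / (c - a) * a + (1 - (c - b) / (c - a)) * c = b); last by field.
rewrite (_ : 1 - (c - b) / (c - a) = (b - a) / (c - a)); last by field.
apply; first by apply: divr_ge0; lra.
by rewrite ler_pdivrMr ?mul1r; lra.
Qed.

Lemma convex_fun_le_max f a b p : convex_fun f -> a <= p <= b ->
  f p <= Num.max (f a) (f b).
Proof.
move=> cf /andP[ap pb]; set M := Num.max _ _.
have [fa fb] : f a <= M /\ f b <= M by rewrite !le_max !lexx orbT.
have [ab|ab] := eqVneq a b.
  by have -> : p = a by apply/eqP; rewrite eq_le ap ab pb.
have lt_ab : a < b by rewrite lt_neqAle ab (le_trans ap pb).
apply: le_trans (convex_fun_le_chord cf ap pb lt_ab) _.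
have l0 : 0 <= (b - p) / (b - a) by apply: divr_ge0; lra.
have l1 : 0 <= (p - a) / (b - a) by apply: divr_ge0; lra.
have -> : M = (b - p) / (b - a) * M + (p - a) / (b - a) * M.
  by field; rewrite subr_eq0 eq_sym.
by apply: lerD; apply: ler_wpM2l.
Qed.

Lemma convex_fun_reflect f : convex_fun f -> convex_fun (fun p => f (- p)).
Proof. by move=> cf a b l l0 l1; rewrite opprD -!mulrN; exact: cf. Qed.

End convex_fun.

Lemma separately_convex_reflect (R : realType) (h : R -> R -> R) :
  separately_convex h -> separately_convex (fun p q => h (- p) (- q)).
Proof.
by case=> c1 c2; split=> y;
  [exact: convex_fun_reflect (c1 (- y)) | exact: convex_fun_reflect (c2 (- y))].
Qed.

Lemma separately_convex_le_antidiag (R : realType) (h : R -> R -> R) (x s r : R) :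
  separately_convex h -> 0 < s < r ->
  h (x + s) (x - s) <= (r - s) / (r + s) * h (x - s) (x - s)
    + s / r * h (x + r) (x - r) + (r - s) * s / (r * (r + s)) * h (x + r) (x + r).
Proof.
case=> c1 c2 /andP[s0 sr].
have := convex_fun_le_chord (c1 (x - s))
  (_ : x - s <= x + s) (_ : x + s <= x + r) (_ : x - s < x + r).
have := convex_fun_le_chord (c2 (x + r))
  (_ : x - r <= x - s) (_ : x - s <= x + r) (_ : x - r < x + r).
move=> /(_ ltac:(lra) ltac:(lra) ltac:(lra)) H2 /(_ ltac:(lra) ltac:(lra) ltac:(lra)) H1.
apply: (le_trans H1).
have k0 : 0 <= (x + s - (x - s)) / (x + r - (x - s)) by apply: divr_ge0; lra.
apply: le_trans (lerD (lexx _) (ler_wpM2l k0 H2)) _.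
rewrite le_eqVlt; apply/orP; left; apply/eqP.
field; apply/and3P; split; apply/lt0r_neq0; lra.
Qed.

Definition cross_omega (R : realType) (h : R -> R -> R) (x r : R) : R :=
  h (x + r) (x - r) + h (x - r) (x + r) - 2 * h x x.

Section separately_convex.
Context {R : realType} (h : R -> R -> R).
Hypothesis hc : separately_convex h.

Lemma cross_omega_slope_le (g : R -> R) x s r : (forall t, g t = h t t) -> 0 < s < r ->
  cross_omega h x s / s <=
  cross_omega h x r / r + (r - s) / (r + s) * (omega g x s / s + omega g x r / r).
Proof.
move=> hg sr; have /andP[s0 _] := sr.
have P := separately_convex_le_antidiag x hc sr.
(* The bound for h (x - s) (x + s) is the same lemma for the reflection of h through (x, x). *)
have /= Q := separately_convex_le_antidiag (- x) (separately_convex_reflect hc) sr.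
rewrite !opprD !opprK in Q.
rewrite -subr_ge0 in P; rewrite -subr_ge0 in Q.
have := divr_ge0 (addr_ge0 P Q) (ltW s0).
set X := (_ + _) / s.
have -> : X = cross_omega h x r / r - cross_omega h x s / s
    + (r - s) / (r + s) * (omega g x s / s + omega g x r / r).
  by rewrite /X /cross_omega /omega !hg; field; apply/and3P; split; apply/lt0r_neq0; lra.
by rewrite addrAC subr_ge0.
Qed.

Lemma cross_omega_omega_ge0 (g : R -> R) x r : (forall t, g t = h t t) ->
  0 <= cross_omega h x r + omega g x r.
Proof.
case: hc => c1 c2 hg; rewrite /cross_omega /omega !hg.
have := convex_fun_midpoint x r (c1 (x - r)).
have := convex_fun_midpoint x r (c1 (x + r)).
have := convex_fun_midpoint x r (c2 x).
lra.
Qed.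

Lemma separately_convex_bounded_above a b :
  exists M, forall p q, a <= p <= b -> a <= q <= b -> h p q <= M.
Proof.
case: hc => c1 c2.
exists (Num.max (Num.max (h a a) (h a b)) (Num.max (h b a) (h b b))) => p q pab qab.
apply: le_trans (convex_fun_le_max (c1 q) pab) _.
by apply: le_max2; exact: convex_fun_le_max.
Qed.

Lemma separately_convex_diag_bounded_below a b :
  exists m, forall p, a <= p <= b -> m <= h p p.
Proof.
have [M hM] := separately_convex_bounded_above a b.
set c := (a + b) / 2.
have ec : c + c = a + b by rewrite /c; field.
exists (4 * h c c - 3 * M) => p /andP[ap pb].
case: hc => c1 c2.
have /= := convex_fun_midpoint c (p - c) (c1 p).
have /= := convex_fun_midpoint c (p - c) (c2 c).
have -> : c + (p - c) = p by ring.
have := hM (c - (p - c)) p ltac:(apply/andP; split; lra) ltac:(apply/andP; split; lra).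
have := hM c (c - (p - c)) ltac:(apply/andP; split; lra) ltac:(apply/andP; split; lra).
lra.
Qed.

End separately_convex.

Section local_monotonicity.
Context {R : realType}.
Implicit Types (F : R -> R) (t u : R).

Lemma le_of_locally_nondecreasing F t u : t <= u ->
  (forall p, t <= p <= u -> exists2 d : R, 0 < d &
     forall s, t <= s <= u -> `|s - p| < d ->
       (s <= p -> F s <= F p) /\ (p <= s -> F p <= F s)) ->
  F t <= F u.
Proof.
move=> tu loc.
pose A := [set s | t <= s <= u /\ forall s', t <= s' <= s -> F t <= F s'].
have At : A t.
  split=> [|s' /andP[ts' s't]]; first by rewrite lexx tu.
  by have -> : s' = t by apply/eqP; rewrite eq_le ts' s't.
have supA : has_sup A by split; [exists t | exists u => s [/andP[]]].
set m := sup A.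
have [tm mu] : t <= m /\ m <= u.
  by split; [exact: sup_upper_bound | apply: ge_sup => [|s [/andP[]]]; first exists t].
have below_m s : t <= s -> s < m -> F t <= F s.
  move=> ts /(sup_gt (ex_intro _ t At))[s' [_ As'] ss'].
  by apply: As'; rewrite ts ltW.
have [d d0 Hd] := loc m ltac:(by rewrite tm mu).
have Fm : F t <= F m.
  have [<-//|tm'] := eqVneq t m.
  pose s := Num.max t (m - d / 2).
  have ltm : t < m by rewrite lt_neqAle tm' tm.
  have [ts sm] : t <= s /\ s < m by rewrite le_max lexx gt_max ltm; split=> //; lra.
  have sd : m - d / 2 <= s by rewrite le_max lexx orbT.
  have [Fsm _] := Hd s ltac:(apply/andP; lra) ltac:(rewrite ltr_distlC; lra).
  exact: le_trans (below_m s ts sm) (Fsm (ltW sm)).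
have [<-//|mu'] := eqVneq m u.
pose s := Num.min u (m + d / 2).
have lmu : m < u by rewrite lt_neqAle mu' mu.
have [ms su] : m < s /\ s <= u by rewrite lt_min ge_min lexx lmu; split=> //; lra.
have sd : s <= m + d / 2 by rewrite ge_min lexx orbT.
suff As : A s by move: (sup_upper_bound supA As); rewrite -/m; lra.
split=> [|s' /andP[ts' s's]]; first by apply/andP; lra.
have [s'm|ms'] := leP s' m.
  by move: s'm; rewrite le_eqVlt => /predU1P[->//|]; exact: below_m.
have [_ Fms'] := Hd s' ltac:(apply/andP; lra) ltac:(rewrite ltr_distlC; lra).
exact: le_trans Fm (Fms' (ltW ms')).
Qed.

Lemma le_of_local_slope F t u : t <= u ->
  (forall e p, 0 < e -> t <= p <= u -> exists2 d : R, 0 < d &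
     forall a b, t <= a -> a <= p -> p <= b -> b <= u -> b - a < d ->
       F a - F b <= e * (b - a)) ->
  F t <= F u.
Proof.
move=> tu slope; apply/ler_addgt0Pr => e e0.
set k := e / (u - t + 1).
have k0 : 0 < k by apply: divr_gt0; lra.
have ek : k * u - k * t + k = e by rewrite /k; field; rewrite lt0r_neq0 //; lra.
suff : F t + k * t <= F u + k * u by lra.
apply: (le_of_locally_nondecreasing (F := fun s => F s + k * s) tu) => p tpu.
have [d d0 Hd] := slope k p k0 tpu; have /andP[tp pu] := tpu.
exists d => // s /andP[ts su]; rewrite ltr_distlC => /andP[ds sd].
split=> [sp | ps].
- by have := Hd s p ts sp (lexx p) pu ltac:(lra); rewrite mulrBr; lra.
- by have := Hd p s tp (lexx p) ps su ltac:(lra); rewrite mulrBr; lra.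
Qed.

End local_monotonicity.

Lemma locally_lipschitz_continuous (R : realType) (g : R -> R) :
  locally_lipschitz g -> continuous g.
Proof.
move=> gl p; apply/cvgrPdist_lt => e e0.
have [d d0 [L gL]] := gl p.
have L1 : 0 < `|L| + 1 by rewrite ltr_pwDr // normr_ge0.
have r0 : 0 < Num.min d (e / (`|L| + 1)) by rewrite lt_min d0 divr_gt0.
apply/nbhs_ballP; exists (Num.min d (e / (`|L| + 1))) => // y.
rewrite /ball /= lt_min => /andP[yd ye].
apply: le_lt_trans (gL p y _ _) _; first by rewrite subrr normr0.
  by rewrite distrC.
rewrite ltr_pdivlMr // in ye; apply: le_lt_trans ye.
by rewrite [leRHS]mulrC; apply: ler_wpM2r; [exact: normr_ge0 | have := ler_norm L; lra].
Qed.

Definition omega_quot (R : realType) (g : R -> R) (x t : R) : R :=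
  omega g x t / t ^+ 2.

Section omega_integral.
Context {R : realType} (g : R -> R) (x : R).
Hypothesis gc : continuous g.
Implicit Types (a b c m p r e u v : R).
Local Notation mu := (@lebesgue_measure R).
Local Notation J a b := (\int[mu]_(t in `[a, b]) omega_quot g x t).

Lemma omega_quot_continuous p : p != 0 -> {for p, continuous (omega_quot g x)}.
Proof.
move=> p0; apply: cvgM; last first.
  by apply: cvgV; rewrite ?expf_neq0 //; apply: cvgM; exact: cvg_id.
apply: cvgB; last exact: cvg_cst.
apply: cvgD; (apply: continuous_comp; last exact: gc).
  by apply: cvgD; [exact: cvg_cst | exact: cvg_id].
by apply: cvgB; [exact: cvg_cst | exact: cvg_id].
Qed.

Lemma omega_quot_integrable a b : 0 < a ->
  mu.-integrable `[a, b] (EFin \o omega_quot g x).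
Proof.
move=> a0; apply: continuous_compact_integrable; first exact: segment_compact.
apply: continuous_in_subspaceT => p; rewrite inE /= in_itv /= => /andP[ap _].
by apply: omega_quot_continuous; rewrite gt_eqF // (lt_le_trans a0).
Qed.

Lemma int_omegaE u v : 0 < v ->
  int_omega g x u v = (J v u)%:E.
Proof.
move=> v0; rewrite /int_omega /Rintegral fineK //.
exact: integrable_fin_num (omega_quot_integrable u v0).
Qed.

Lemma omega_integral_split a b c : 0 < a -> a <= b -> b <= c -> J a c = J a b + J b c.
Proof.
move=> a0 ab bc.
have := @Rintegral_itvB R (omega_quot g x) (BLeft a) (BRight c) b
  (omega_quot_integrable c a0) ltac:(by rewrite bnd_simp) ltac:(by rewrite bnd_simp).
rewrite Rintegral_itv_obnd_cbnd; last first.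
  by apply: integrableS (omega_quot_integrable c a0) => //; apply: subset_itvr; rewrite bnd_simp.
by move=> <-; rewrite addrC subrK.
Qed.

Lemma omega_integral_ge a b m : 0 < a -> a <= b ->
  (forall r, a <= r <= b -> m <= omega_quot g x r) ->
  m * (b - a) <= J a b.
Proof.
move=> a0 ab hm.
have -> : m * (b - a) = \int[mu]_(t in `[a, b]) m.
  rewrite Rintegral_cst //; have := @lebesgue_measure_itv R `[a, b]; rewrite /= => ->.
  have [lt_ab|ba] := ltP a b; first by rewrite lte_fin lt_ab -EFinB.
  have -> : b = a by apply/eqP; rewrite eq_le ab ba.
  by rewrite ltxx subrr.
apply: le_Rintegral => //.
- apply: continuous_compact_integrable; first exact: segment_compact.
  by apply: continuous_subspaceT => p; exact: cvg_cst.
- exact: omega_quot_integrable.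
Qed.

Lemma omega_quot_near p e : 0 < p -> 0 < e -> exists2 d : R, 0 < d &
  forall r, `|r - p| < d -> omega_quot g x p - e < omega_quot g x r < omega_quot g x p + e.
Proof.
move=> p0 e0.
have /cvgrPdist_lt/(_ e e0)/nbhs_ballP[d d0 pd] := omega_quot_continuous (lt0r_neq0 p0).
by exists d => // r rp; rewrite -ltr_distlC; apply: pd; rewrite /ball /= distrC.
Qed.

End omega_integral.

Section cross_omega_integral.
Context {R : realType} (g : R -> R) (h : R -> R -> R) (x u : R).
Hypotheses (gc : continuous g) (hc : separately_convex h) (hg : forall t, g t = h t t).
Hypothesis u0 : 0 < u.
Implicit Types (a b m e t : R).
Local Notation mu := (@lebesgue_measure R).
Local Notation J a b := (\int[mu]_(t in `[a, b]) omega_quot g x t).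
Local Notation psi := (omega_quot g x).

Let K s := cross_omega h x s / s - J s u.

Let K_local_slope a b m e : 0 < a -> a <= b -> b <= u ->
  (forall r, a <= r <= b -> m <= psi r <= m + e) -> K a - K b <= e * (b - a).
Proof.
move=> a0 ab bu hm.
have [<-|neq_ab] := eqVneq a b; first by rewrite !subrr mulr0.
have lt_ab : a < b by rewrite lt_neqAle neq_ab ab.
have b0 : 0 < b by lra.
have slope := cross_omega_slope_le hc x hg (_ : 0 < a < b).
have Jab := omega_integral_ge gc a0 ab (fun r rab => proj1 (andP (hm r rab))).
have /andP[_ psia] := hm a ltac:(by rewrite lexx ab).
have /andP[_ psib] := hm b ltac:(by rewrite lexx ab).
have ea : omega g x a / a = a * psi a by rewrite /omega_quot; field; rewrite gt_eqF.
have eb : omega g x b / b = b * psi b by rewrite /omega_quot; field; rewrite gt_eqF.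
have k0 : 0 <= (b - a) / (b + a) by apply: divr_ge0; lra.
have : (b - a) / (b + a) * (a * psi a + b * psi b) <= (b - a) * (m + e).
  have -> : (b - a) * (m + e) = (b - a) / (b + a) * ((a + b) * (m + e)).
    by field; rewrite gt_eqF //; lra.
  apply: ler_wpM2l => //.
  by have := ler_wpM2l (ltW a0) psia; have := ler_wpM2l (ltW b0) psib; lra.
rewrite /K (omega_integral_split x gc a0 ab bu) -ea -eb; have := slope ltac:(lra); lra.
Qed.

Lemma cross_omega_quot_le t : 0 < t -> t <= u ->
  cross_omega h x t / t - J t u <= cross_omega h x u / u.
Proof.
move=> t0 tu.
have -> : cross_omega h x u / u = K u by rewrite /K set_itv1 Rintegral_set1 subr0.
apply: (le_of_local_slope (F := K) tu) => e p e0 /andP[tp pu].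
have [d d0 near_p] := omega_quot_near x gc (lt_le_trans t0 tp) (divr_gt0 e0 (ltr0n _ 2)).
exists d => // a b ta ap pb bu bad.
apply: (K_local_slope (m := psi p - e / 2)); [lra..|].
move=> r /andP[ar rb]; have := near_p r ltac:(rewrite ltr_distlC; lra).
by move=> /andP[? ?]; apply/andP; split; lra.
Qed.

Let Z s := - ((J s u + cross_omega h x u / u) / s).

Let Z_local_slope a b e : 0 < a -> a <= b -> b <= u ->
  (forall r, a <= r <= b -> psi b - e <= psi r) -> Z a - Z b <= e * (b - a) / a.
Proof.
move=> a0 ab bu hm; have b0 : 0 < b by lra.
have Jab := omega_integral_ge gc a0 ab hm.
have Kb := cross_omega_quot_le b0 bu.
have Db : 0 <= cross_omega h x b / b + b * psi b.
  have -> : cross_omega h x b / b + b * psi b = (cross_omega h x b + omega g x b) / b.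
    by rewrite /omega_quot; field; rewrite gt_eqF.
  by apply: divr_ge0; [exact: cross_omega_omega_ge0 | exact: ltW].
have X0 : 0 <= J b u + cross_omega h x u / u + b * psi b by lra.
have -> : Z a - Z b = e * (b - a) / a - (J a b - (psi b - e) * (b - a)) / a
    - (b - a) * (J b u + cross_omega h x u / u + b * psi b) / (a * b).
  by rewrite /Z (omega_integral_split x gc a0 ab bu); field; rewrite !gt_eqF.
have : 0 <= (J a b - (psi b - e) * (b - a)) / a by apply: divr_ge0; lra.
have : 0 <= (b - a) * (J b u + cross_omega h x u / u + b * psi b) / (a * b).
  by apply: divr_ge0; apply: mulr_ge0; lra.
lra.
Qed.

Lemma cross_omega_integral_ge t : 0 < t -> t <= u ->
  - (cross_omega h x u / u) * (1 - t / u) <= J t u.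
Proof.
move=> t0 tu.
suff : Z t <= Z u.
  rewrite /Z set_itv1 Rintegral_set1 add0r lerN2 ler_pdivlMr //.
  set c := cross_omega h x u / u.
  have -> : - c * (1 - t / u) = c / u * t - c by ring.
  lra.
apply: (le_of_local_slope (F := Z) tu) => e p e0 /andP[tp pu].
have et : 0 < e * t / 2 by rewrite divr_gt0 ?mulr_gt0.
have [d d0 near_p] := omega_quot_near x gc (lt_le_trans t0 tp) et.
exists d => // a b ta ap pb bu bad.
apply: le_trans (Z_local_slope (e := e * t) _ _ _ _) _; [lra.. | |].
- move=> r /andP[ar rb].
  have := near_p r ltac:(rewrite ltr_distlC; lra).
  have := near_p b ltac:(rewrite ltr_distlC; lra).
  move=> /andP[? ?] /andP[? ?]; lra.
- rewrite ler_pdivrMr; last lra.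
  by rewrite [leLHS]mulrAC; apply: ler_wpM2l ta; apply: mulr_ge0; lra.
Qed.

End cross_omega_integral.

Lemma limf_einf_ge_cvg {R : realType} (F : set_system R) {FF : Filter F}
    (f : R -> \bar R) (phi : R -> R) (l : R) :
  (\forall v \near F, (phi v)%:E <= f v)%E -> phi @ F --> l ->
  (l%:E <= limf_einf f F)%E.
Proof.
move=> phif phil; apply/lee_subgt0Pr => e e0; rewrite -EFinB limf_einfE.
have Fle : \forall v \near F, ((l - e)%:E <= f v)%E.
  near=> v; apply: le_trans (_ : (phi v)%:E <= f v)%E; last by near: v.
  rewrite lee_fin; have : `|l - phi v| < e by near: v; exact: cvgr_dist_lt.
  by rewrite ltr_distlC => /andP[? _]; lra.
apply: le_ereal_sup_tmp; exists (ereal_inf (f @` [set v | ((l - e)%:E <= f v)%E])).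
  by exists [set v | ((l - e)%:E <= f v)%E].
by apply/ereal_infP => _ [v + <-].
Unshelve. all: by end_near.
Qed.

Lemma cross_omega_ge_liminf {R : realType} (g : R -> R) (h : R -> R -> R) (x u : R) :
  continuous g -> separately_convex h -> (forall t, g t = h t t) -> 0 < u ->
  (- (u%:E * liminf_0plus (int_omega g x u)) <= (cross_omega h x u)%:E)%E.
Proof.
move=> gc hc hg u0; set c := - (cross_omega h x u / u).
suff cL : (c%:E <= liminf_0plus (int_omega g x u))%E.
  rewrite leeNl (_ : - _ = u%:E * c%:E)%E ?lee_pmul2l ?lte_fin //.
  by rewrite -EFinM -EFinN /c; congr (_%:E); field; rewrite gt_eqF.
apply: (limf_einf_ge_cvg (phi := fun v => c * (1 - v / u))).
  near=> v.
  have [v0 vu] : 0 < v /\ v <= u.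
    by split; near: v; [exact: nbhs_right_gt | exact: nbhs_right_le].
  by rewrite int_omegaE // lee_fin; exact: cross_omega_integral_ge.
rewrite -[X in _ --> X](_ : c * (1 - 0 / u) = c); last by rewrite mul0r subr0 mulr1.
apply: cvg_at_right_filter; apply: cvgM; first exact: cvg_cst.
by apply: cvgB; [exact: cvg_cst | apply: cvgM; [exact: cvg_id | exact: cvg_cst]].
Unshelve. all: by end_near.
Qed.

Theorem proposition4p1 (R : realType) (g : R -> R) (h : R -> R -> R) :
  locally_lipschitz g ->
  separately_convex h ->
  (forall t : R, g t = h t t) ->
  (forall x u : R, 0 < u ->
     ((h (x + u) (x - u) + h (x - u) (x + u) - 2 * h x x)%:E >=
      - (u%:E * liminf_0plus (int_omega g x u)))%E) /\
  (forall a b : R, exists C : R, forall x : R, a <= x <= b ->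
     (- liminf_0plus (int_omega g x 1) < C%:E)%E).
Proof.
move=> gl hc hg; have gc := locally_lipschitz_continuous gl.
split=> [x u u0 | a b]; first exact: cross_omega_ge_liminf.
have [M hM] := separately_convex_bounded_above hc (a - 1) (b + 1).
have [m hm] := separately_convex_diag_bounded_below hc a b.
exists (2 * M - 2 * m + 1) => x xab; have /andP[ax xb] := xab.
have := cross_omega_ge_liminf x gc hc hg ltr01; rewrite mul1e => /le_lt_trans; apply.
rewrite lte_fin /cross_omega.
have := hm x xab.
have := hM (x + 1) (x - 1) ltac:(apply/andP; lra) ltac:(apply/andP; lra).
have := hM (x - 1) (x + 1) ltac:(apply/andP; lra) ltac:(apply/andP; lra).
lra.
Qed.
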